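(* Let $\{b_1,\dots,b_n\}$ and $\{a_1,\dots,a_n\}$ be two bases of an $n$-dimensional vector space $V$ and let $i\in\{1,\dots,n-1\}$. Then there exists a bijection $\phi$ from the set of $i$-element subsets of $\{1,\dots,n\}$ to the set of $(n-i)$-element subsets of $\{1,\dots,n\}$ such that for every $i$-element subset $I$, the set $\{b_k:k\in I\}\cup\{a_j:j\in\phi(I)\}$ is a basis of $V$. *)

From mathcomp Require Import all_boot all_algebra.
Set Implicit Arguments.
Unset Strict Implicit.
Unset Printing Implicit Defensive.

From mathcomp Require Import all_boot all_algebra.
From mathcomp Require Import fingroup perm.
Set Implicit Arguments.
Unset Strict Implicit.
Unset Printing Implicit Defensive.
Import GRing.Theory.
Local Open Scope ring_scope.

(* Write the b_k in the basis a: the coordinate matrix M is invertible, hence so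
   is its i-th compound matrix C_i(M), whose (I, K) entry is the i x i minor of M
   on rows I and columns K (Cauchy-Binet makes C_i multiplicative).  A matrix
   with nonzero determinant has a permutation avoiding its zero entries, so
   there is a bijection sigma on i-subsets with every minor M[I, sigma I]
   nonzero.  Such a minor being invertible, the b_k (k in I) together with the
   a_j (j outside sigma I) span V, so phi I := complement of sigma I works. *)

Section EnumAt.
Variables (p n : nat) (d : 'I_n).
Implicit Types (L : {set 'I_n}) (x : 'I_n).

(* [d] is a dummy default, never reached when [#|L| = p]. *)
Definition enum_at L (r : 'I_p) : 'I_n := nth d (enum L) r.

Lemma enum_at_mem L r : #|L| = p -> enum_at L r \in L.
Proof. by move=> hL; rewrite /enum_at -mem_enum mem_nth // -cardE hL. Qed.

Lemma enum_at_inj L : #|L| = p -> injective (enum_at L).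
Proof.
move=> hL r1 r2 /eqP; rewrite /enum_at nth_uniq ?enum_uniq ?ltn_ord -?cardE ?hL //.
by move/eqP/val_inj.
Qed.

Lemma index_enum_lt L x : #|L| = p -> x \in L -> (index x (enum L) < p)%N.
Proof. by move=> hL xL; rewrite -hL cardE index_mem mem_enum. Qed.

Lemma enum_at_index L x (hL : #|L| = p) (xL : x \in L) :
  enum_at L (Ordinal (index_enum_lt hL xL)) = x.
Proof. by rewrite /enum_at /= nth_index ?mem_enum. Qed.

Lemma big_enum_at (R : nmodType) L (G : 'I_n -> R) :
  #|L| = p -> \sum_(j in L) G j = \sum_(c < p) G (enum_at L c).
Proof. by move=> hL; rewrite -big_enum (big_nth d) -cardE hL big_mkord. Qed.

End EnumAt.

Arguments enum_at_inj [p n] d [L].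

Section CauchyBinet.
Variables (R : comNzRingType) (p n : nat) (d : 'I_n).
Local Notation enum_at := (@enum_at p n d).

Lemma det_mulmx_ffun (A : 'M[R]_(p, n)) (B : 'M[R]_(n, p)) :
  \det (A *m B) = \sum_(f : {ffun 'I_p -> 'I_n})
    (\prod_r A r (f r)) * \det (\matrix_(r, c) B (f r) c).
Proof.
transitivity (\sum_(s : 'S_p) (-1) ^+ s * \sum_(f : {ffun 'I_p -> 'I_n})
                 \prod_i (A i (f i) * B (f i) (s i))).
  apply: eq_bigr => s _; congr (_ * _).
  rewrite -(bigA_distr_bigA (fun i j => A i j * B j (s i))).
  by apply: eq_bigr => i _; rewrite mxE.
under eq_bigr do rewrite big_distrr.
rewrite exchange_big; apply: eq_bigr => f _ /=.
rewrite /determinant big_distrr; apply: eq_bigr => s _ /=.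
rewrite big_split /= mulrCA; congr (_ * (_ * _)).
by apply: eq_bigr => i _; rewrite mxE.
Qed.

Lemma det_row_select_noninj (B : 'M[R]_(n, p)) (f : {ffun 'I_p -> 'I_n}) :
  ~~ injectiveb f -> \det (\matrix_(r, c) B (f r) c) = 0.
Proof.
case/injectivePn => i1 [i2 Di12 Ef12].
by rewrite (determinant_alternate Di12) // => j; rewrite !mxE Ef12.
Qed.

Lemma big_injective_image (L : {set 'I_n}) (G : {ffun 'I_p -> 'I_n} -> R) :
  #|L| = p ->
  \sum_(f : {ffun 'I_p -> 'I_n} | injectiveb f && (f @: setT == L)) G f =
  \sum_(t : 'S_p) G [ffun r => enum_at L (t r)].
Proof.
move=> hL; pose h (t : 'S_p) := [ffun r => enum_at L (t r)].
pose h' (f : {ffun 'I_p -> 'I_n}) := odflt 1%g [pick t | h t == f].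
have h_inj : injective h.
  move=> t1 t2 /ffunP e; apply/permP => r.
  by apply: (enum_at_inj d hL); have := e r; rewrite !ffunE.
have h_injb t : injectiveb (h t).
  by apply/injectiveP => r1 r2; rewrite !ffunE => /(enum_at_inj d hL)/perm_inj.
have h_image t : h t @: setT = L.
  apply/eqP; rewrite eqEcard hL card_imset ?cardsT ?card_ord ?leqnn ?andbT.
    by apply/subsetP => x /imsetP [r _ ->]; rewrite ffunE enum_at_mem.
  exact/injectiveP/h_injb.
rewrite (reindex_onto h h') /=; last first.
  move=> f /andP [/injectiveP f_inj /eqP f_im].
  have fL r : f r \in L by rewrite -f_im imset_f.
  pose g r := Ordinal (index_enum_lt hL (fL r)).
  have g_inj : injective g.
    move=> r1 r2 e; apply: f_inj.
    by rewrite -(enum_at_index d hL (fL r1)) -(enum_at_index d hL (fL r2)); congr enum_at.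
  have hg : h (perm g_inj) = f by apply/ffunP => r; rewrite ffunE permE enum_at_index.
  by rewrite /h'; case: pickP => [t /eqP //|/(_ (perm g_inj))]; rewrite hg eqxx.
apply: eq_bigl => t; rewrite h_injb h_image eqxx /=; apply/eqP.
by rewrite /h'; case: pickP => [t' /eqP /h_inj //|/(_ t)]; rewrite eqxx.
Qed.

Lemma cauchy_binet (A : 'M[R]_(p, n)) (B : 'M[R]_(n, p)) :
  \det (A *m B) = \sum_(L : {set 'I_n} | #|L| == p)
    \det (\matrix_(r, c) A r (enum_at L c)) * \det (\matrix_(r, c) B (enum_at L r) c).
Proof.
rewrite det_mulmx_ffun (bigID (fun f : {ffun 'I_p -> 'I_n} => injectiveb f)) /=.
rewrite [X in _ + X]big1 ?addr0; last by move=> f /det_row_select_noninj ->; rewrite mulr0.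
rewrite (partition_big (fun f : {ffun 'I_p -> 'I_n} => f @: setT)
          (fun L : {set 'I_n} => #|L| == p)) /=; last first.
  by move=> f /injectiveP f_inj; rewrite card_imset // cardsT card_ord.
apply: eq_bigr => L /eqP hL; rewrite big_injective_image //.
have row_select (t : 'S_p) : \matrix_(r, c) B ([ffun r => enum_at L (t r)] r) c =
                    row_perm t (\matrix_(r, c) B (enum_at L r) c).
  by apply/matrixP => r c; rewrite !mxE ffunE.
under eq_bigr do rewrite row_select row_permE det_mulmx det_perm.
rewrite /determinant big_distrl /=; apply: eq_bigr => t _.
rewrite mulrA; congr (_ * _); rewrite mulrC; congr (_ * _).
by apply: eq_bigr => r _; rewrite !mxE ffunE.
Qed.

End CauchyBinet.

Lemma det_neq0_perm (R : comNzRingType) m (A : 'M[R]_m) :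
  \det A != 0 -> exists s : 'S_m, forall i, A i (s i) != 0.
Proof.
move=> detA; suff /existsP [s /forallP As] : [exists s : 'S_m, [forall i, A i (s i) != 0]].
  by exists s.
apply: contraR detA => /existsPn noperm; apply/eqP.
rewrite /determinant big1 // => s _; have /forallPn [i /negPn /eqP Ai0] := noperm s.
by rewrite (bigD1 i) //= Ai0 mul0r mulr0.
Qed.

Section Compound.
Variables (F : fieldType) (p n : nat) (d : 'I_n).
Local Notation T := {set 'I_n}.
Local Notation enum_at := (@enum_at p n d).

Definition minor (M : 'M[F]_n) (I K : T) : F :=
  \det (\matrix_(r, c) M (enum_at I r) (enum_at K c)).

(* Extended by the identity off the p-subsets, so that the compound matrix is
   indexed by all of {set 'I_n} and is still multiplicative. *)
Definition compound_coef (M : 'M[F]_n) (I K : T) : F :=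
  if (#|I| == p) && (#|K| == p) then minor M I K else (I == K)%:R.

Definition compound_mx (M : 'M[F]_n) : 'M[F]_#|T| :=
  \matrix_(u, v) compound_coef M (enum_val u) (enum_val v).

Lemma compound_coef_off (M : 'M[F]_n) (I K : T) :
  (#|I| == p) != (#|K| == p) -> compound_coef M I K = 0.
Proof.
rewrite /compound_coef; have [->|_] := eqVneq I K; first by rewrite eqxx.
by case: ifP => // /andP[/eqP -> /eqP ->]; rewrite eqxx.
Qed.

Lemma compound_coefM (M N : 'M[F]_n) (I K : T) :
  compound_coef (M *m N) I K = \sum_(L : T) compound_coef M I L * compound_coef N L K.
Proof.
have [hI|hI] := eqVneq #|I| p; have [hK|hK] := eqVneq #|K| p.
- rewrite [LHS]/compound_coef hI hK eqxx /=.
  rewrite (bigID (fun L : T => #|L| == p)) /= [X in _ + X]big1 ?addr0; last first.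
    by move=> L hL; rewrite compound_coef_off ?mul0r // hI eqxx; case: eqP hL.
  transitivity (\det ((\matrix_(r, j) M (enum_at I r) j) *m
                      (\matrix_(j, c) N j (enum_at K c)))).
    by congr (\det _); apply/matrixP => r c; rewrite !mxE;
       apply: eq_bigr => j _; rewrite !mxE.
  rewrite (cauchy_binet d); apply: eq_bigr => L hL.
  rewrite /compound_coef hI hK hL eqxx /= /minor.
  by congr (_ * _); congr (\det _); apply/matrixP => r c; rewrite !mxE.
- rewrite compound_coef_off; last by rewrite hI eqxx (negbTE hK).
  symmetry; rewrite big1 // => L _; have [hL|hL] := eqVneq #|L| p.
    by rewrite (@compound_coef_off N) ?mulr0 // hL eqxx (negbTE hK).
  by rewrite (@compound_coef_off M) ?mul0r // hI eqxx (negbTE hL).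
- rewrite compound_coef_off; last by rewrite hK eqxx (negbTE hI).
  symmetry; rewrite big1 // => L _; have [hL|hL] := eqVneq #|L| p.
    by rewrite (@compound_coef_off M) ?mul0r // hL eqxx (negbTE hI).
  by rewrite (@compound_coef_off N) ?mulr0 // hK eqxx (negbTE hL).
- rewrite [LHS]/compound_coef (negbTE hI) /= (bigD1 I) //= big1 ?addr0.
    by rewrite /compound_coef (negbTE hI) (negbTE hK) /= eqxx mul1r.
  by move=> L /negbTE nIL; rewrite [compound_coef M I L]/compound_coef (negbTE hI) /=
       eq_sym nIL mul0r.
Qed.

Lemma compound_mxM (M N : 'M[F]_n) :
  compound_mx (M *m N) = compound_mx M *m compound_mx N.
Proof.
apply/matrixP => u v; rewrite !mxE compound_coefM.
under [RHS]eq_bigr do rewrite !mxE.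
by rewrite (reindex (@enum_val _ (pred_of_simpl predT))) //; exact: onW_bij (enum_val_bij _).
Qed.

Lemma minor1 (I K : T) : #|I| = p -> #|K| = p -> minor 1%:M I K = (I == K)%:R.
Proof.
move=> hI hK; rewrite /minor; have [<-|IK] := eqVneq I K.
  rewrite -[RHS](det1 F p); congr (\det _); apply/matrixP => r c.
  by rewrite !mxE (inj_eq (enum_at_inj d hI)).
have [x xI xK] : exists2 x, x \in I & x \notin K.
  by apply/subsetPn; apply: contra IK => sIK; rewrite eqEcard sIK hI hK leqnn.
rewrite (expand_det_row _ (Ordinal (index_enum_lt hI xI))) big1 // => c _.
rewrite !mxE enum_at_index; case: eqP => [xKc|_]; last by rewrite mul0r.
by have := enum_at_mem d c hK; rewrite -xKc (negbTE xK).
Qed.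

Lemma compound_mx1 : compound_mx 1%:M = 1%:M.
Proof.
apply/matrixP => u v; rewrite !mxE /compound_coef -(inj_eq enum_val_inj).
by case: ifP => // /andP[/eqP hI /eqP hK]; rewrite minor1.
Qed.

Lemma compound_mx_unit (M : 'M[F]_n) : M \in unitmx -> compound_mx M \in unitmx.
Proof.
move=> Mu; have := compound_mxM M (invmx M).
by rewrite mulmxV // compound_mx1 => /esym/mulmx1_unit [].
Qed.

Lemma minor_matching (M : 'M[F]_n) : M \in unitmx ->
  exists sigma : T -> T, [/\ injective sigma,
    forall I : T, (#|sigma I| == p) = (#|I| == p) &
    forall I : T, #|I| = p -> minor M I (sigma I) != 0].
Proof.
move=> /compound_mx_unit; rewrite unitmxE unitfE => /det_neq0_perm [s hs].
pose sigma (I : T) := enum_val (s (enum_rank I)).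
have sigma_coef I : compound_coef M I (sigma I) != 0.
  by have := hs (enum_rank I); rewrite mxE enum_rankK.
have sigma_card I : (#|sigma I| == p) = (#|I| == p).
  apply: contraNeq (sigma_coef I) => ne.
  by rewrite compound_coef_off // eq_sym.
exists sigma; split => //.
- by move=> I1 I2 /enum_val_inj/perm_inj/enum_rank_inj.
- move=> I hI; have := sigma_coef I.
  by rewrite /compound_coef sigma_card hI eqxx.
Qed.

End Compound.

Section ExchangeBasis.
Variables (F : fieldType) (V : vectType F).

Lemma unitmx_comb_memv p (Q : 'M[F]_p) (v : 'I_p -> V) (U : {vspace V}) :
  Q \in unitmx -> (forall r, \sum_c Q r c *: v c \in U) -> forall c, v c \in U.
Proof.
move=> Qu combU c0.
have -> : v c0 = \sum_c (invmx Q *m Q) c0 c *: v c.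
  rewrite mulVmx // (bigD1 c0) //= big1 => [|c nc]; rewrite mxE.
    by rewrite eqxx scale1r addr0.
  by rewrite eq_sym (negbTE nc) scale0r.
under eq_bigr do rewrite mxE scaler_suml; rewrite exchange_big /=.
apply: memv_suml => r _; under eq_bigr do rewrite -scalerA.
by rewrite -scaler_sumr; apply/memvZ/combU.
Qed.

Variable n : nat.

Definition coord_mx (a b : n.-tuple V) : 'M[F]_n := \matrix_(k, j) coord a j (tnth b k).

Lemma coord_mx_unit (a b : n.-tuple V) :
  basis_of fullv a -> basis_of fullv b -> coord_mx a b \in unitmx.
Proof.
move=> ha hb; suff /mulmx1_unit [] : coord_mx a b *m coord_mx b a = 1%:M by [].
apply/matrixP => k l; rewrite !mxE.
have := coord_free k l (basis_free hb); rewrite -(tnth_nth 0) => <-.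
rewrite {1}(coord_basis ha (memvf (tnth b k))) linear_sum /=.
by apply: eq_bigr => j _; rewrite linearZ /= !mxE [tnth a j](tnth_nth 0).
Qed.

Lemma minor_exchange_basis p (d : 'I_n) (a b : n.-tuple V) (I K : {set 'I_n}) :
  basis_of fullv a -> #|I| = p -> #|K| = p ->
  minor p d (coord_mx a b) I K != 0 ->
  basis_of fullv ([seq tnth b k | k in I] ++ [seq tnth a j | j in ~: K]).
Proof.
set X := _ ++ _ => ha hI hK minor_neq0; have aX j : j \notin K -> tnth a j \in <<X>>%VS.
  by move=> jK; apply: memv_span; rewrite mem_cat map_f ?orbT // mem_enum in_setC.
have sizeX : size X = n by rewrite size_cat !size_map -!cardE hI -hK cardsC card_ord.
rewrite basisEdim sizeX (size_basis ha) leqnn andbT -(span_basis ha).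
apply/span_subvP => _ /tnthP [j ->]; have [jK|/aX //] := boolP (j \in K).
pose Q : 'M[F]_p := \matrix_(r, c) coord_mx a b (enum_at d I r) (enum_at d K c).
rewrite -(enum_at_index d hK jK).
apply: (@unitmx_comb_memv _ Q (fun c => tnth a (enum_at d K c))).
  by rewrite unitmxE unitfE.
move=> r; set k := enum_at d I r.
have bk : tnth b k = \sum_l coord_mx a b k l *: tnth a l.
  rewrite {1}(coord_basis ha (memvf (tnth b k))).
  by apply: eq_bigr => l _; rewrite mxE [tnth a l](tnth_nth 0).
rewrite (bigID (mem K)) /= (big_enum_at d _ hK) in bk.
rewrite (eq_bigr (fun c => coord_mx a b k (enum_at d K c) *: tnth a (enum_at d K c)));
  last by move=> c _; rewrite mxE.
rewrite -[X in X \in _](addrK (\sum_(l | l \notin K) coord_mx a b k l *: tnth a l)) -bk.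
apply: memvB; first by apply: memv_span; rewrite mem_cat map_f // mem_enum enum_at_mem.
by apply: memv_suml => l lK; apply/memvZ/aX.
Qed.

End ExchangeBasis.

Theorem lemma2p2 (F : fieldType) (V : vectType F) (n i : nat)
    (b a : n.-tuple V)
    (hdim : \dim (fullv : {vspace V}) = n)
    (hb : basis_of fullv b) (ha : basis_of fullv a)
    (hi1 : (0 < i)%N) (hi2 : (i < n)%N) :
  exists phi : {set 'I_n} -> {set 'I_n},
    [/\ (forall I : {set 'I_n}, #|I| = i -> #|phi I| = (n - i)%N),
        {in [pred I : {set 'I_n} | #|I| == i] &, injective phi},
        (forall J : {set 'I_n}, #|J| = (n - i)%N ->
            exists2 I : {set 'I_n}, #|I| = i & phi I = J) &
        (forall I : {set 'I_n}, #|I| = i ->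
            basis_of fullv ([seq tnth b k | k in I] ++ [seq tnth a j | j in phi I]))].
Proof.
pose d : 'I_n := Ordinal (leq_ltn_trans (leq0n i) hi2).
have [sigma [sigma_inj sigma_card sigma_minor]] :=
  minor_matching i d (coord_mx_unit ha hb).
have cardC (K : {set 'I_n}) : #|~: K| = (n - #|K|)%N.
  by rewrite cardsCs setCK card_ord.
exists (fun I => ~: sigma I); split.
- by move=> I /eqP; rewrite -sigma_card cardC => /eqP ->.
- by move=> I1 I2 _ _ /setC_inj /sigma_inj.
- move=> J hJ; have [tau sigmaK tauK] := injF_bij sigma_inj.
  exists (tau (~: J)); last by rewrite tauK setCK.
  by apply/eqP; rewrite -sigma_card tauK cardC hJ subKn // ltnW.
- move=> I hI; apply: (minor_exchange_basis ha hI _ (sigma_minor I hI)).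
  by apply/eqP; rewrite sigma_card hI.
Qed.
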